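(* Assume the standing assumptions in the context. For $(k,y)\in\mathbb{S}$ and $N\in\mathbb{N}$ let $V((k,y),N)$ be the number of visits of the walk to $(k,y)$ before time $N$. Then for each $K>0$ the family of random variables $V((k,y),N)/\sqrt{N}$, where the walk is started from $\xi(0)=z$, is uniformly integrable, uniformly over $N\in\mathbb{N}$, $z\in\mathbb{S}$, and $(k,y)\in\mathbb{S}$ with $|k|\le K\sqrt{N}$.
   Context: Fix $m\ge1$, $\mathbb{S}=\mathbb{Z}\times\{1,\dots,m\}$. Environment $(P_n,Q_n,R_n)_{n\in\mathbb{Z}}$, nonnegative $m\times m$ with $(P_n+Q_n+R_n)\mathbf{1}=\mathbf{1}$; the walk $\xi$ jumps from $(n,i)$ to $(n+1,j),(n,j),(n-1,j)$ with probabilities $P_n(i,j),R_n(i,j),Q_n(i,j)$. Norm $\|x\|=\max|x_i|$. Standing assumptions: ellipticity ($\bar\varepsilon>0$, $k_0$ with $\|R_n^{k_0}\|\le1-\bar\varepsilon$, $((I-R_n)^{-1}P_n)(i,j)\ge\bar\varepsilon$, $((I-R_n)^{-1}Q_n)(i,j)\ge\bar\varepsilon$); bounded potential ($\zeta_n=\lim_{a\to-\infty}\psi_{n,a}$, $\psi_{a,a}$ any stochastic, $\psi_{n,a}=(I-R_n-Q_n\psi_{n-1,a})^{-1}P_n$, $A_n=(I-R_n-Q_n\zeta_{n-1})^{-1}Q_n$, $|\log\|A_n\cdots A_1\||\le C_P$ for $n\ge1$, $|\log\|A_0\cdots A_{n+1}\||\le C_P$ for $n\le-1$); column vectors $\mathfrak{m}_n$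 with $\mathfrak{m}_n=P_n\mathfrak{m}_{n+1}+R_n\mathfrak{m}_n+Q_n\mathfrak{m}_{n-1}$, $|\mathfrak{m}_{n'}(i')-\mathfrak{m}_{n''}(i'')|\le K'$ for $|n'-n''|\le1$, $\sum_j\mathfrak{m}_n(j)/n\to m$ as $|n|\to\infty$; with $\zeta^-_n$ the unique stochastic sequence with $\zeta^-_n=(I-R_n-P_n\zeta^-_{n+1})^{-1}Q_n$ and $\alpha_n=Q_{n+1}(I-R_n-Q_n\zeta_{n-1})^{-1}$, positive bounded row vectors $\rho_n$ with $\rho_n=\rho_{n-1}P_{n-1}+\rho_nR_n+\rho_{n+1}Q_{n+1}$, $\rho_n=\rho_{n+1}\alpha_n$, $\rho_nP_n(\mathfrak{m}_{n+1}-\zeta^-_{n+1}\mathfrak{m}_n)=\frac1{2m}$; and a constant $a$ with $\lim_{N\to\pm\infty}\frac1{|N|}\sum_{n=0}^{N-1}\rho_n\mathbf{1}=a$. *)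

From HB Require Import structures.
From mathcomp Require Import all_boot all_order all_algebra.
From mathcomp Require Import reals exp.
Set Implicit Arguments. Unset Strict Implicit. Unset Printing Implicit Defensive.
Import Order.TTheory GRing.Theory Num.Theory.
Local Open Scope ring_scope.

Definition stochastic (R : realType) (m : nat) (A : 'M[R]_m) : Prop :=
  (forall i j, 0 <= A i j) /\ (forall i, \sum_(j < m) A i j = 1).

(* operator norm induced by ||x|| = max_i |x_i|: maximal absolute row sum *)
Definition mxnorm (R : realType) (p q : nat) (A : 'M[R]_(p, q)) : R :=
  \big[Num.max/0]_(i < p) \sum_(j < q) `|A i j|.

Definition mxpow (R : realType) (m : nat) (A : 'M[R]_m) (k : nat) : 'M[R]_m :=
  iter k (mulmx A) 1%:M.

Fixpoint mprodl (R : realType) (m : nat) (f : nat -> 'M[R]_m) (k : nat) : 'M[R]_m :=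
  match k with 0 => 1%:M | k'.+1 => mprodl f k' *m f k' end.

Fixpoint mprodr (R : realType) (m : nat) (f : nat -> 'M[R]_m) (k : nat) : 'M[R]_m :=
  match k with 0 => 1%:M | k'.+1 => f k' *m mprodr f k' end.

(* psi_{a+k,a}, with psi_{a,a} = init a and
   psi_{n,a} = (I - R_n - Q_n psi_{n-1,a})^{-1} P_n for n > a *)
Fixpoint psiF (R : realType) (m : nat) (Pm Qm Rm : int -> 'M[R]_m)
    (init : int -> 'M[R]_m) (a : int) (k : nat) : 'M[R]_m :=
  match k with
  | 0 => init a
  | k'.+1 =>
      let n := (a + (k'.+1)%:Z)%R in
      invmx (1%:M - Rm n - Qm n *m psiF Pm Qm Rm init a k') *m Pm n
  end.

Definition Amx (R : realType) (m : nat) (Qm Rm : int -> 'M[R]_m)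
    (zeta : int -> 'M[R]_m) (n : int) : 'M[R]_m :=
  invmx (1%:M - Rm n - Qm n *m zeta (n - 1)) *m Qm n.

Definition alphamx (R : realType) (m : nat) (Qm Rm : int -> 'M[R]_m)
    (zeta : int -> 'M[R]_m) (n : int) : 'M[R]_m :=
  Qm (n + 1) *m invmx (1%:M - Rm n - Qm n *m zeta (n - 1)).

(* sum_{n=0}^{N-1} rho_n 1, read as sum_{n=N}^{-1} when N < 0 *)
Definition rho_sum (R : realType) (m : nat) (rho : int -> 'rV[R]_m) (N : int) : R :=
  if (0 <= N)%R then \sum_(0 <= j < `|N|%N) \sum_(i < m) rho (j%:Z) 0 i
  else \sum_(1 <= j < `|N|%N.+1) \sum_(i < m) rho (- (j%:Z)) 0 i.

Definition standing_assumptions (R : realType) (m : nat)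
    (Pm Qm Rm : int -> 'M[R]_m) (zeta zetam : int -> 'M[R]_m)
    (mf : int -> 'cV[R]_m) (rho : int -> 'rV[R]_m) (a : R) : Prop :=
  (forall n i j, 0 <= Pm n i j /\ 0 <= Qm n i j /\ 0 <= Rm n i j) /\
  (forall n i, \sum_(j < m) (Pm n i j + Qm n i j + Rm n i j) = 1) /\
  (exists (eps : R) (k0 : nat), 0 < eps /\
     forall n, mxnorm (mxpow (Rm n) k0) <= 1 - eps /\
       (forall i j, eps <= (invmx (1%:M - Rm n) *m Pm n) i j) /\
       (forall i j, eps <= (invmx (1%:M - Rm n) *m Qm n) i j)) /\
  (* zeta_n = lim_{a -> -oo} psi_{n,a}, for any stochastic choice of psi_{a,a} *)
  (forall init : int -> 'M[R]_m, (forall b, stochastic (init b)) ->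
     forall n (e : R), 0 < e -> exists a0 : int, forall b : int,
       (b <= a0)%R -> (b <= n)%R ->
       mxnorm (psiF Pm Qm Rm init b `|n - b|%N - zeta n) <= e) /\
  (exists CP : R,
     (forall k : nat, (0 < k)%N ->
        `| ln (mxnorm (mprodr (fun j => Amx Qm Rm zeta (j.+1)%:Z) k)) | <= CP) /\
     (forall k : nat, (0 < k)%N ->
        `| ln (mxnorm (mprodl (fun j => Amx Qm Rm zeta (- (j%:Z))) k)) | <= CP)) /\
  (forall n, mf n = Pm n *m mf (n + 1) + Rm n *m mf n + Qm n *m mf (n - 1)) /\
  (exists K' : R, forall (n1 n2 : int) (i1 i2 : 'I_m), (`|n1 - n2| <= 1)%R ->
     `|mf n1 i1 0 - mf n2 i2 0| <= K') /\
  (forall e : R, 0 < e -> exists L : nat, forall n : int, (L < `|n|)%N ->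
     `|(\sum_(j < m) mf n j 0) / n%:~R - m%:R| <= e) /\
  (forall n, stochastic (zetam n)) /\
  (forall n, zetam n = invmx (1%:M - Rm n - Pm n *m zetam (n + 1)) *m Qm n) /\
  (forall z : int -> 'M[R]_m, (forall n, stochastic (z n)) ->
     (forall n, z n = invmx (1%:M - Rm n - Pm n *m z (n + 1)) *m Qm n) ->
     forall n, z n = zetam n) /\
  (forall n i, 0 < rho n 0 i) /\
  (exists B : R, forall n i, rho n 0 i <= B) /\
  (forall n, rho n = rho (n - 1) *m Pm (n - 1) + rho n *m Rm n + rho (n + 1) *m Qm (n + 1)) /\
  (forall n, rho n = rho (n + 1) *m alphamx Qm Rm zeta n) /\
  (forall n, (rho n *m Pm n *m (mf (n + 1) - zetam (n + 1) *m mf n)) 0 0 = (2 * m%:R)^-1) /\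
  (forall e : R, 0 < e -> exists L : nat, forall N : int, (L < `|N|)%N ->
     `|rho_sum rho N / (`|N|%N)%:R - a| <= e).

(* a step: direction d.1 in {0,1,2} meaning level change -1, 0, +1, and new
   strip coordinate d.2 *)
Definition step (m : nat) : finType := ('I_3 * 'I_m)%type.

Definition move (m : nat) (x : int * 'I_m) (d : step m) : int * 'I_m :=
  ((x.1 + (nat_of_ord d.1)%:Z - 1)%R, d.2).

Definition stepw (R : realType) (m : nat) (Pm Qm Rm : int -> 'M[R]_m)
    (x : int * 'I_m) (d : step m) : R :=
  match nat_of_ord d.1 with
  | 0 => Qm x.1 x.2 d.2
  | 1 => Rm x.1 x.2 d.2
  | _ => Pm x.1 x.2 d.2
  end.

Fixpoint pathw (R : realType) (m : nat) (Pm Qm Rm : int -> 'M[R]_m)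
    (x : int * 'I_m) (s : seq (step m)) : R :=
  match s with
  | [::] => 1
  | d :: s' => stepw Pm Qm Rm x d * pathw Pm Qm Rm (move x d) s'
  end.

Fixpoint traj (m : nat) (x : int * 'I_m) (s : seq (step m)) : seq (int * 'I_m) :=
  x :: match s with [::] => [::] | d :: s' => traj (move x d) s' end.

Definition visits (m : nat) (v z : int * 'I_m) (N : nat) (s : seq (step m)) : nat :=
  count (pred1 v) (take N (traj z s)).

(* E_z[ X 1_{X > M} ] with X = V(v,N)/sqrt N, computed over the first N steps *)
Definition ui_tail (R : realType) (m : nat) (Pm Qm Rm : int -> 'M[R]_m)
    (z v : int * 'I_m) (N : nat) (M : R) : R :=
  \sum_(s : N.-tuple (step m))
     pathw Pm Qm Rm z s *
     (let X := (visits v z N s)%:R / Num.sqrt (N%:R) in if M < X then X else 0).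

(* The first coordinate of the walk is tracked by the harmonic function
   f (n, i) = m_n(i): f(xi_t) is a martingale with increments at most K', so the
   submartingale |f(xi_t) - f(v)| has mean of order sqrt t.  By ellipticity the
   walk started at v = (k, y) visits both (k + 1, j) and (k, l) within H steps
   with probability bounded below, and the identity
   rho_k P_k (m_{k+1} - zeta^-_{k+1} m_k) = 1/2m provides j, l with
   m_{k+1}(j) - m_k(l) bounded below.  Hence the submartingale gains a fixed
   amount within H steps of each visit to v, and a Tanaka-type argument gives
   E V(v, N) <= C sqrt N.  The Markov property turns this into E V(v, N)^2 <= D N,
   and X 1_{X > M} <= X^2 / M for X = V(v, N) / sqrt N gives uniform
   integrability, uniformly over all sites v. *)

From HB Require Import structures.
From mathcomp Require Import all_boot all_order all_algebra.
From mathcomp Require Import reals exp.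
From mathcomp Require Import ring lra zify.
Import Order.TTheory GRing.Theory Num.Theory.
Local Open Scope ring_scope.

Section RealFacts.
Variable F : archiRealFieldType.

Lemma exists_expr_le (r c : F) : 0 <= r -> r < 1 -> 0 < c ->
  exists q : nat, r ^+ q <= c.
Proof.
move=> r0 r1 c0; set d := 1 - r.
have d0 : 0 < d by rewrite /d subr_gt0.
have bernoulli : forall q : nat, r ^+ q * (1 + q%:R * d) <= 1.
  elim=> [|q IH]; first by rewrite expr0 mul0r addr0 mul1r.
  have rq : 0 <= r ^+ q by apply: exprn_ge0.
  have step : r * (1 + q.+1%:R * d) <= 1 + q%:R * d.
    have qn : 0 <= q%:R :> F by exact: ler0n.
    have hdd : 0 <= (q%:R + 1) * d * d.
      by apply: mulr_ge0; [apply: mulr_ge0|]; lra.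
    rewrite -addn1 natrD (_ : r = 1 - d); last by rewrite /d; ring.
    nra.
  apply: le_trans IH; rewrite exprS mulrAC [X in _ <= X]mulrC.
  exact: ler_wpM2r.
have cd0 : 0 < c * d by apply: mulr_gt0.
set q := Num.Def.archi_bound (c * d)^-1.
have hq : 1 < q%:R * (c * d).
  rewrite -ltr_pdivrMr // div1r; apply: archi_boundP.
  by rewrite invr_ge0 ltW.
exists q; have rq : 0 <= r ^+ q by apply: exprn_ge0.
have := bernoulli q; nra.
Qed.

Lemma ler_norm_sqr (t lam : F) : 0 < lam -> `|t| <= (t ^+ 2 + lam ^+ 2) / (2 * lam).
Proof.
move=> lam0; rewrite ler_pdivlMr ?mulr_gt0 // -real_normK ?num_real //.
have := sqr_ge0 (`|t| - lam); nra.
Qed.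

Lemma sum_window (G : nat -> F) T c N : (forall s, 0 <= G s) -> (c + T <= N)%N ->
  \sum_(t < T) G (t + c)%N <= \sum_(s < N) G s.
Proof.
move=> G0 hN.
rewrite -(big_mkord xpredT (fun t => G (t + c)%N)) -(big_mkord xpredT G).
have -> : \sum_(0 <= t < T) G (t + c)%N = \sum_(c <= s < c + T) G s.
  by rewrite -{2}[c]add0n big_addn addKn.
rewrite (@big_cat_nat _ _ _ c 0 N) //=; last by apply: leq_trans hN; exact: leq_addr.
rewrite (@big_cat_nat _ _ _ (c + T) c N) //=; last exact: leq_addr.
have h1 : 0 <= \sum_(0 <= i < c) G i by apply: sumr_ge0.
have h2 : 0 <= \sum_(c + T <= i < N) G i by apply: sumr_ge0.
lra.
Qed.

Lemma exists_ge_weighted n (u x : 'I_n -> F) (U s : F) :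
  0 < s -> 0 < U -> (forall j, 0 <= u j <= U) -> s <= \sum_j u j * x j ->
  exists j, s / (2 * (n%:R * U)) <= x j.
Proof.
move=> s0 U0 hu hs; set c := s / (2 * (n%:R * U)).
have [/existsP [j hj] | /existsPn hn] := boolP [exists j, c <= x j]; first by exists j.
have c0 : 0 <= c by rewrite /c divr_ge0 ?mulr_ge0 ?ler0n // ltW.
have : \sum_j u j * x j <= \sum_(j < n) U * c.
  apply: ler_sum => j _; case/andP: (hu j) => u0 uU.
  apply: (@le_trans _ _ (u j * c)); last exact: ler_wpM2r.
  by apply: ler_wpM2l => //; rewrite ltW // ltNge hn.
rewrite sumr_const card_ord -mulr_natl mulrA.
have : n%:R * U * c <= s / 2.
  rewrite /c; case: (posnP n) => [->|n0]; first by rewrite !mul0r; lra.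
  rewrite [X in X <= _](_ : _ = s / 2) //; field.
  by rewrite pnatr_eq0 -lt0n n0 gt_eqF.
lra.
Qed.

Lemma exists_ge_convex n (w x : 'I_n -> F) : (0 < n)%N ->
  (forall j, 0 <= w j) -> \sum_j w j = 1 -> exists l, \sum_j w j * x j <= x l.
Proof.
move=> n0 w0 w1.
case: (@arg_maxP _ F _ (Ordinal n0) xpredT x isT) => l _ hl.
exists l; rewrite -[x l]mul1r -w1 mulr_suml.
by apply: ler_sum => j _; apply: ler_wpM2l => //; exact: hl.
Qed.

Lemma ler_term_sum (I : finType) (G : I -> F) i0 :
  (forall i, 0 <= G i) -> G i0 <= \sum_i G i.
Proof. by move=> G0; rewrite (bigD1 i0) //= lerDl sumr_ge0. Qed.

Lemma tail_le_sqr (M V s : F) : 0 < M -> 0 <= V ->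
  (let X := V / s in if M < X then X else 0) <= (V / s) ^+ 2 / M.
Proof.
move=> M0 V0 /=; case: ifP => hM; last by rewrite divr_ge0 ?sqr_ge0 // ltW.
by rewrite ler_pdivlMr // expr2 ler_wpM2l // ltW // (lt_trans M0).
Qed.

End RealFacts.
Arguments ler_term_sum {F I G} i0.
Arguments sum_window {F}.
Arguments exists_expr_le {F r c}.
Arguments exists_ge_weighted {F n u x U s}.
Arguments exists_ge_convex {F n w} x.

Section SqrtNat.
Variable F : rcfType.

Lemma sqrt_nat_ge1 n : 1 <= Num.sqrt (n.+1%:R : F).
Proof.
have : Num.sqrt 1 <= Num.sqrt (n.+1%:R : F) by rewrite ler_sqrt // ler1n.
by rewrite sqrtr1.
Qed.

Lemma sqrt_nat_le n : Num.sqrt (n%:R : F) <= n%:R.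
Proof.
case: n => [|n]; first by rewrite sqrtr0.
rewrite -{2}[n.+1%:R](@sqr_sqrtr _ (n.+1%:R : F)) ?ler0n // expr2.
by rewrite ler_peMl ?sqrtr_ge0 ?sqrt_nat_ge1.
Qed.

End SqrtNat.

Section Matrices.
Variables (R : realType) (m : nat).

Definition rowbound {p} (A : 'M[R]_(p, m)) (c : R) := forall i, \sum_j `|A i j| <= c.
Definition nonneg (A : 'M[R]_m) := forall i j, 0 <= A i j.

Lemma mxnorm_rowbound (A : 'M[R]_m) c : mxnorm A <= c -> rowbound A c.
Proof.
move=> h i; apply: le_trans h; rewrite /mxnorm.
by rewrite [X in _ <= X](bigD1 i) //= le_max lexx.
Qed.

Lemma rowsum_mulmx_le {p} (A : 'M[R]_(p, m)) (B : 'M[R]_m) i :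
  \sum_j `|(A *m B) i j| <= \sum_l `|A i l| * (\sum_j `|B l j|).
Proof.
apply: (@le_trans _ _ (\sum_j \sum_l `|A i l| * `|B l j|)).
  apply: ler_sum => j _; rewrite mxE; apply: (le_trans (ler_norm_sum _ _ _)).
  by apply: ler_sum => l _; rewrite normrM.
by rewrite exchange_big /=; apply: ler_sum => l _; rewrite mulr_sumr.
Qed.

Lemma rowbound_mul {p} (A : 'M[R]_(p, m)) (B : 'M[R]_m) a b :
  rowbound A a -> rowbound B b -> 0 <= b -> rowbound (A *m B) (a * b).
Proof.
move=> hA hB b0 i; apply: (le_trans (rowsum_mulmx_le A B i)).
apply: (@le_trans _ _ (\sum_l `|A i l| * b)).
  by apply: ler_sum => l _; apply: ler_wpM2l.
by rewrite -mulr_suml; apply: ler_wpM2r.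
Qed.

Lemma mxpowS (A : 'M[R]_m) k : mxpow A k.+1 = A *m mxpow A k.
Proof. by []. Qed.

Lemma mxpowD (A : 'M[R]_m) a b : mxpow A (a + b) = mxpow A a *m mxpow A b.
Proof.
elim: a => [|a IH]; first by rewrite add0n mul1mx.
by rewrite addSn !mxpowS IH mulmxA.
Qed.

Lemma rowbound1 : rowbound (1%:M : 'M[R]_m) 1.
Proof.
move=> i; rewrite (bigD1 i) //= big1 ?addr0; first by rewrite mxE eqxx normr1.
by move=> j /negPf hj; rewrite mxE eq_sym hj normr0.
Qed.

Lemma rowbound_mxpowM (A : 'M[R]_m) k r q :
  rowbound (mxpow A k) r -> 0 <= r -> rowbound (mxpow A (k * q)) (r ^+ q).
Proof.
move=> h r0; elim: q => [|q IH]; first by rewrite muln0 expr0; exact: rowbound1.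
by rewrite mulnS mxpowD exprS; apply: rowbound_mul => //; apply: exprn_ge0.
Qed.

Lemma nonneg_mul (A B : 'M[R]_m) : nonneg A -> nonneg B -> nonneg (A *m B).
Proof.
by move=> hA hB i j; rewrite mxE; apply: sumr_ge0 => l _; exact: mulr_ge0.
Qed.

Lemma nonneg_mxpow (A : 'M[R]_m) k : nonneg A -> nonneg (mxpow A k).
Proof.
move=> h; elim: k => [|k IH]; first by move=> i j; rewrite mxE ler0n.
by rewrite mxpowS; apply: nonneg_mul.
Qed.

Lemma mxpowS_mul_sum (A B : 'M[R]_m) t (G : 'I_m -> R) y :
  \sum_j (mxpow A t.+1 *m B) y j * G j =
  \sum_l A y l * \sum_j (mxpow A t *m B) l j * G j.
Proof.
rewrite mxpowS -mulmxA.
under eq_bigr do rewrite mxE mulr_suml.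
rewrite exchange_big /=; apply: eq_bigr => l _.
by rewrite mulr_sumr; apply: eq_bigr => j _; rewrite mulrA.
Qed.

(* A left null vector of 1 - A would be fixed by A^k, which shrinks its l1 norm. *)
Lemma unitmx_1B_contract (A : 'M[R]_m) k eps : 0 < eps ->
  rowbound (mxpow A k) (1 - eps) -> (1%:M - A) \in unitmx.
Proof.
move=> e0 hb; rewrite unitmxE unitfE; apply/negP => /det0P [v vn0 hv].
have vA : v *m A = v.
  by move: hv; rewrite mulmxBr mulmx1 => /eqP; rewrite subr_eq0 => /eqP <-.
have vAk : forall k, v *m mxpow A k = v.
  by elim=> [|k' IH]; rewrite ?mulmx1 // mxpowS mulmxA vA.
set s := \sum_i `|v 0 i|.
have s0 : 0 <= s by apply: sumr_ge0.
have hs : s <= s * (1 - eps).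
  rewrite {1}/s -(vAk k); apply: (le_trans (rowsum_mulmx_le _ _ _)).
  rewrite /s mulr_suml; apply: ler_sum => l _; apply: ler_wpM2l => //; exact: hb.
have s00 : s = 0 by nra.
apply: (negP vn0); apply/eqP/matrixP => i j; rewrite mxE ord1.
apply/normr0_eq0/eqP; rewrite eq_le normr_ge0 andbT -s00.
by rewrite /s (bigD1 j) //= lerDl; apply: sumr_ge0.
Qed.

Lemma mxpow_expansion (A B X : 'M[R]_m) T : X = B + A *m X ->
  X = \sum_(t < T) (mxpow A t *m B) + mxpow A T *m X.
Proof.
move=> eX; elim: T => [|T IH]; first by rewrite big_ord0 add0r mul1mx.
rewrite {1}eX {1}IH mulmxDr mulmx_sumr big_ord_recl /= mul1mx -addrA mulmxA.
by congr (_ + (_ + _)); apply: eq_bigr => t _; rewrite mulmxA.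
Qed.

Lemma sum_nonneg_mul_ge0 (A : 'M[R]_m) i (G : 'I_m -> R) :
  nonneg A -> (forall j, 0 <= G j) -> 0 <= \sum_j A i j * G j.
Proof. by move=> A0 G0; apply: sumr_ge0 => j _; exact: mulr_ge0. Qed.

(* (1 - A)^-1 B = \sum_(t < T) A^t B + A^T (1 - A)^-1 B, and the remainder is at
   most eps / 2 because the rows of (1 - A)^-1 (B + C) sum to 1. *)
Lemma neumann_sum_ge (A B C : 'M[R]_m) eps T :
  0 < eps -> (1%:M - A) \in unitmx ->
  (forall i, \sum_j (B i j + C i j + A i j) = 1) ->
  (forall i j, eps <= (invmx (1%:M - A) *m B) i j) ->
  (forall i j, eps <= (invmx (1%:M - A) *m C) i j) ->
  rowbound (mxpow A T) (eps / 2) ->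
  forall i j, eps / 2 <= \sum_(t < T) (mxpow A t *m B) i j.
Proof.
move=> e0 hU hS hX hY hT i j.
set X := invmx (1%:M - A) *m B; set Y := invmx (1%:M - A) *m C.
have ones : (B + C) *m const_mx 1 = (1%:M - A) *m (const_mx 1 : 'cV[R]_m).
  apply/matrixP => i' k; rewrite !mxE.
  under eq_bigr do rewrite !mxE mulr1.
  under [RHS]eq_bigr do rewrite !mxE mulr1.
  have delta : \sum_j (i' == j)%:R = 1 :> R.
    rewrite (bigD1 i') //= eqxx big1 ?addr0 // => j'.
    by rewrite eq_sym => /negPf ->.
  rewrite sumrB delta.
  have := hS i'; rewrite big_split /=; lra.
have XY : forall i', \sum_j X i' j + \sum_j Y i' j = 1.
  move=> i'; have := congr1 (fun M : 'cV[R]_m => M i' 0)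
    (congr1 (mulmx (invmx (1%:M - A))) ones).
  rewrite mulKmx // mulmxA mulmxDr !mxE => <-.
  by rewrite -big_split /=; apply: eq_bigr => j' _; rewrite !mxE mulr1.
have X1 : forall i' j', 0 <= X i' j' <= 1.
  move=> i' j'; have X0 l : 0 <= X i' l by apply: le_trans (hX _ _); lra.
  rewrite X0 /= -(XY i'); apply: (@le_trans _ _ (\sum_j X i' j)).
    by rewrite (bigD1 j') //= lerDl; apply: sumr_ge0.
  by rewrite lerDl; apply: sumr_ge0 => l _; apply: le_trans (hY _ _); lra.
have eX : X = B + A *m X.
  have : (1%:M - A) *m X = B by rewrite /X mulmxA mulmxV // mul1mx.
  by rewrite mulmxBl mul1mx => <-; rewrite subrK.
have hr : (mxpow A T *m X) i j <= eps / 2.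
  apply: (le_trans (ler_norm _)); rewrite mxE; apply: (le_trans (ler_norm_sum _ _ _)).
  apply: le_trans (hT i); apply: ler_sum => l _; rewrite normrM.
  rewrite -[Z in _ <= Z]mulr1; apply: ler_wpM2l => //.
  by case/andP: (X1 l j) => X0 X1'; rewrite ger0_norm.
have := hX i j; rewrite -/X {1}(mxpow_expansion _ _ _ T eX) [in Z in Z -> _]mxE summxE.
lra.
Qed.

End Matrices.
Arguments nonneg {R m}.
Arguments rowbound {R m p}.
Arguments sum_nonneg_mul_ge0 {R m A i G}.
Arguments nonneg_mul {R m A B}.
Arguments nonneg_mxpow {R m A}.
Arguments mxnorm_rowbound {R m A c}.
Arguments rowbound_mxpowM {R m A k r q}.
Arguments unitmx_1B_contract {R m A k eps}.
Arguments neumann_sum_ge {R m A B C eps T}.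

Section Walk.
Variables (R : realType) (m : nat) (Pm Qm Rm : int -> 'M[R]_m).
Hypothesis kernel_ge0 : forall n i j, 0 <= Pm n i j /\ 0 <= Qm n i j /\ 0 <= Rm n i j.
Hypothesis kernel_sum1 : forall n i, \sum_(j < m) (Pm n i j + Qm n i j + Rm n i j) = 1.

Local Notation S := (int * 'I_m)%type.

Definition Pop (f : S -> R) (x : S) : R :=
  \sum_(d : step m) stepw Pm Qm Rm x d * f (move x d).
Definition Pt n f := iter n Pop f.

Lemma Pm_nonneg n : nonneg (Pm n).
Proof. by move=> i j; case: (kernel_ge0 n i j). Qed.

Lemma Qm_nonneg n : nonneg (Qm n).
Proof. by move=> i j; case: (kernel_ge0 n i j) => _ []. Qed.

Lemma Rm_nonneg n : nonneg (Rm n).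
Proof. by move=> i j; case: (kernel_ge0 n i j) => _ []. Qed.

Lemma stepw_ge0 x d : 0 <= stepw Pm Qm Rm x d.
Proof.
rewrite /stepw; case: (nat_of_ord d.1) => [|[|k]];
  [exact: Qm_nonneg | exact: Rm_nonneg | exact: Pm_nonneg].
Qed.

Lemma Pop_split f x : Pop f x =
  \sum_j Qm x.1 x.2 j * f (x.1 - 1, j) + \sum_j Rm x.1 x.2 j * f (x.1, j)
  + \sum_j Pm x.1 x.2 j * f (x.1 + 1, j).
Proof.
rewrite /Pop.
transitivity (\sum_(i < 3) \sum_(j < m) stepw Pm Qm Rm x (i, j) * f (move x (i, j))).
  by rewrite pair_bigA; apply: eq_bigr => -[i j].
rewrite !big_ord_recl big_ord0 addr0 addrA /move /stepw /=.
have e0 : x.1 + 0%:Z - 1 = x.1 - 1 by rewrite addr0.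
have e1 : x.1 + 1%:Z - 1 = x.1 by rewrite addrK.
have e2 : x.1 + 2%:Z - 1 = x.1 + 1 by rewrite -addrA.
by rewrite e0 e1 e2.
Qed.

Lemma stepw_sum x : \sum_d stepw Pm Qm Rm x d = 1.
Proof.
transitivity (Pop (fun _ => 1) x).
  by apply: eq_bigr => d _; rewrite mulr1.
rewrite Pop_split -!big_split /= -[RHS](kernel_sum1 x.1 x.2).
by apply: eq_bigr => j _ /=; rewrite !mulr1; ring.
Qed.

Lemma Pop_ext f g x : (forall y, f y = g y) -> Pop f x = Pop g x.
Proof. by move=> fg; apply: eq_bigr => d _; rewrite fg. Qed.

Lemma Pop_le f g x : (forall y, f y <= g y) -> Pop f x <= Pop g x.
Proof. by move=> fg; apply: ler_sum => d _; apply: ler_wpM2l; [exact: stepw_ge0|]. Qed.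

Lemma Pop_ge0 f x : (forall y, 0 <= f y) -> 0 <= Pop f x.
Proof. by move=> f0; apply: sumr_ge0 => d _; apply: mulr_ge0; [exact: stepw_ge0|]. Qed.

Lemma Pop_affine a b c f g x :
  Pop (fun y => a * f y + b * g y + c) x = a * Pop f x + b * Pop g x + c.
Proof.
rewrite /Pop; transitivity (\sum_d (a * (stepw Pm Qm Rm x d * f (move x d))
   + b * (stepw Pm Qm Rm x d * g (move x d)) + c * stepw Pm Qm Rm x d)).
  by apply: eq_bigr => d _; ring.
by rewrite !big_split /= -!mulr_sumr stepw_sum mulr1.
Qed.

Lemma Pop_scale a f x : Pop (fun y => a * f y) x = a * Pop f x.
Proof. by rewrite /Pop mulr_sumr; apply: eq_bigr => d _; rewrite mulrCA. Qed.

Lemma Pop_sum (I : finType) (F : I -> S -> R) x :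
  Pop (fun y => \sum_i F i y) x = \sum_i Pop (F i) x.
Proof. by rewrite /Pop exchange_big; apply: eq_bigr => d _; rewrite mulr_sumr. Qed.

Lemma PtS n f x : Pt n.+1 f x = Pop (Pt n f) x.
Proof. by rewrite /Pt iterS. Qed.

Lemma PtD a b f x : Pt (a + b) f x = Pt a (Pt b f) x.
Proof. by rewrite /Pt iterD. Qed.

Lemma PtSr n f x : Pt n.+1 f x = Pt n (Pop f) x.
Proof. by rewrite -addn1 PtD. Qed.

Lemma Pt_ext n f g x : (forall y, f y = g y) -> Pt n f x = Pt n g x.
Proof.
elim: n x => [|n IH] x fg; first exact: fg.
by rewrite !PtS; apply: Pop_ext => y; apply: IH.
Qed.

Lemma Pt_le n f g x : (forall y, f y <= g y) -> Pt n f x <= Pt n g x.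
Proof.
elim: n x => [|n IH] x fg; first exact: fg.
by rewrite !PtS; apply: Pop_le => y; apply: IH.
Qed.

Lemma Pt_ge0 n f x : (forall y, 0 <= f y) -> 0 <= Pt n f x.
Proof.
elim: n x => [|n IH] x f0; first exact: f0.
by rewrite !PtS; apply: Pop_ge0 => y; apply: IH.
Qed.

Lemma Pt_lincomb n a b c f g x :
  Pt n (fun y => a * f y + b * g y + c) x = a * Pt n f x + b * Pt n g x + c.
Proof.
elim: n x => [|n IH] x //.
by rewrite !PtS (Pop_ext _ (fun y => a * Pt n f y + b * Pt n g y + c)) ?Pop_affine.
Qed.

Lemma Pt_affine n a c f x : Pt n (fun y => a * f y + c) x = a * Pt n f x + c.
Proof.
rewrite (Pt_ext _ _ (fun y => a * f y + 0 * 0 + c)) => [|y]; last by rewrite mul0r addr0.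
by rewrite Pt_lincomb mul0r addr0.
Qed.

Lemma Pt_const n c x : Pt n (fun _ => c) x = c.
Proof.
rewrite (Pt_ext _ _ (fun y => 0 * 0 + c)) => [|y]; last by rewrite mul0r add0r.
by rewrite Pt_affine mul0r add0r.
Qed.

Lemma Pt_sub n f g x : Pt n (fun y => f y - g y) x = Pt n f x - Pt n g x.
Proof.
rewrite (Pt_ext _ _ (fun y => 1 * f y + (-1) * g y + 0)) => [|y]; last by ring.
by rewrite Pt_lincomb; ring.
Qed.

Lemma Pt_sum n (I : finType) (F : I -> S -> R) x :
  Pt n (fun y => \sum_i F i y) x = \sum_i Pt n (F i) x.
Proof.
elim: n x => [|n IH] x //.
by rewrite !PtS (Pop_ext _ (fun y => \sum_i Pt n (F i) y)) ?Pop_sum.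
Qed.

Definition ind (w : S) : S -> R := fun y => (y == w)%:R.

Lemma ind_ge0 w y : 0 <= ind w y.
Proof. exact: ler0n. Qed.

Section HarmonicFunction.
Variables (f : S -> R) (K' : R).
Hypothesis f_harmonic : forall x, Pop f x = f x.
Hypothesis f_incr : forall x d, `|f (move x d) - f x| <= K'.
Hypothesis K'_ge0 : 0 <= K'.

Lemma Pop_sqr_incr x : Pop (fun w => (f w - f x) ^+ 2) x <= K' ^+ 2.
Proof.
rewrite -[K' ^+ 2]mul1r -(stepw_sum x) mulr_suml; apply: ler_sum => d _.
apply: ler_wpM2l; first exact: stepw_ge0.
by rewrite -real_normK ?num_real //; apply: lerXn2r; rewrite ?nnegrE.
Qed.

Lemma Pop_sqr_dev a y : Pop (fun w => (f w - a) ^+ 2) y =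
  (f y - a) ^+ 2 + Pop (fun w => (f w - f y) ^+ 2) y.
Proof.
rewrite (Pop_ext _ (fun w => 1 * (f w - f y) ^+ 2 + (2 * (f y - a)) * f w
   + ((f y - a) ^+ 2 - 2 * (f y - a) * f y))) => [|w]; last by ring.
by rewrite Pop_affine f_harmonic; ring.
Qed.

Lemma Pt_sqr_dev n a x :
  Pt n (fun w => (f w - a) ^+ 2) x <= (f x - a) ^+ 2 + n%:R * K' ^+ 2.
Proof.
elim: n => [|n IH]; first by rewrite mul0r addr0.
rewrite PtSr; apply: (le_trans (Pt_le n _ (fun w => 1 * (f w - a) ^+ 2 + K' ^+ 2) x _)).
  by move=> y; rewrite Pop_sqr_dev mul1r lerD2l; exact: Pop_sqr_incr.
by rewrite Pt_affine mul1r -[n.+1]addn1 natrD; lra.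
Qed.

Lemma Pt_abs_dev n x : Pt n (fun w => `|f w - f x|) x <= K' * Num.sqrt n%:R + 1.
Proof.
set lam := K' * Num.sqrt n%:R + 1.
have lam0 : 0 < lam by rewrite ltr_pwDr // mulr_ge0 // sqrtr_ge0.
apply: (le_trans (Pt_le n _
  (fun w => (2 * lam)^-1 * (f w - f x) ^+ 2 + lam ^+ 2 / (2 * lam)) x _)).
  by move=> w; rewrite mulrC -mulrDl; exact: ler_norm_sqr.
have hv := Pt_sqr_dev n (f x) x; rewrite subrr expr0n add0r in hv.
have hn : n%:R * K' ^+ 2 <= lam ^+ 2.
  have u0 : 0 <= K' * Num.sqrt n%:R by rewrite mulr_ge0 // sqrtr_ge0.
  rewrite (_ : n%:R * K' ^+ 2 = (K' * Num.sqrt n%:R) ^+ 2); last first.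
    by rewrite exprMn sqr_sqrtr ?ler0n // mulrC.
  rewrite /lam; nra.
rewrite Pt_affine; apply: (@le_trans _ _ ((2 * lam)^-1 * lam ^+ 2 + lam ^+ 2 / (2 * lam))).
  rewrite lerD2r; apply: ler_wpM2l; last exact: le_trans hv hn.
  by rewrite invr_ge0 mulr_ge0 // ltW.
by rewrite [X in X <= _](_ : _ = lam) //; field; rewrite gt_eqF.
Qed.

Lemma Pop_abs_ge c y : `|f y - c| <= Pop (fun w => `|f w - c|) y.
Proof.
have -> : f y - c = \sum_d stepw Pm Qm Rm y d * (f (move y d) - c).
  rewrite -{1}(f_harmonic y) /Pop.
  by under [RHS]eq_bigr do rewrite mulrBr; rewrite sumrB -mulr_suml stepw_sum mul1r.
apply: (le_trans (ler_norm_sum _ _ _)); apply: ler_sum => d _.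
by rewrite normrM ger0_norm // stepw_ge0.
Qed.

Lemma Pt_abs_ge s c y : `|f y - c| <= Pt s (fun w => `|f w - c|) y.
Proof.
elim: s y => [|s IH] y //; rewrite PtS.
by apply: (le_trans (Pop_abs_ge c y)); apply: Pop_le.
Qed.

Lemma Pt_abs_incr n c y :
  Pt n (fun w => `|f w - c|) y - `|f y - c| <= K' * Num.sqrt n%:R + 1.
Proof.
rewrite lerBlDr.
apply: (le_trans (Pt_le n _ (fun w => 1 * `|f w - f y| + `|f y - c|) y _)).
  by move=> w; rewrite mul1r; apply: ler_distD.
by rewrite Pt_affine mul1r lerD2r; apply: Pt_abs_dev.
Qed.

Lemma sum_Pt_abs_shift n s c z :
  \sum_(t < n) (Pt (t + s) (fun w => `|f w - c|) z - Pt t (fun w => `|f w - c|) z)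
  <= s%:R * (K' * Num.sqrt n%:R + 1).
Proof.
set g := fun w => `|f w - c|; elim: s => [|s IH].
  by rewrite mul0r big1 // => t _; rewrite addn0 subrr.
have -> : \sum_(t < n) (Pt (t + s.+1) g z - Pt t g z) = \sum_(t < n)
    ((Pt (t + s) g z - Pt t g z) + (Pt (t.+1 + s) g z - Pt (t + s) g z)).
  by apply: eq_bigr => t _; rewrite addnS -addSn; ring.
rewrite big_split /= -(big_mkord xpredT (fun t => Pt (t.+1 + s) g z - Pt (t + s) g z)).
rewrite telescope_sumr // add0n.
have : Pt (n + s) g z - Pt s g z <= K' * Num.sqrt n%:R + 1.
  rewrite addnC PtD -Pt_sub; apply: (le_trans (Pt_le _ _ (fun _ => _) _ _)).
    by move=> y; exact: Pt_abs_incr.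
  by rewrite Pt_const.
by rewrite -[s.+1]addn1 natrD mulrDl mul1r; lra.
Qed.

(* Tanaka-type estimate: the submartingale |f - f v| gains delta within H steps
   of each visit to v, while by Pt_abs_incr it grows only like sqrt n. *)
Lemma sum_Pt_ind_le v H delta : 0 < delta ->
  delta <= \sum_(s < H) Pt s (fun w => `|f w - f v|) v ->
  forall n z, \sum_(t < n) Pt t (ind v) z <=
    H%:R ^+ 2 * (K' * Num.sqrt n%:R + 1) / delta.
Proof.
move=> d0 hd n z; set g := fun w => `|f w - f v|.
have gain : forall y, delta * ind v y + 0 <= \sum_(s < H) (Pt s g y - g y).
  move=> y; rewrite addr0 /ind; case: eqP => [->|_].
    by rewrite mulr1 /g subrr normr0; under eq_bigr do rewrite subr0.
  by rewrite mulr0; apply: sumr_ge0 => s _; rewrite subr_ge0; exact: Pt_abs_ge.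
have main : delta * \sum_(t < n) Pt t (ind v) z <=
    \sum_(s < H) \sum_(t < n) (Pt (t + s) g z - Pt t g z).
  rewrite mulr_sumr exchange_big; apply: ler_sum => t _.
  rewrite -[X in X <= _]addr0 -Pt_affine; apply: (le_trans (Pt_le _ _ _ _ gain)).
  by rewrite Pt_sum; apply: ler_sum => s _; rewrite Pt_sub -PtD.
rewrite ler_pdivlMr // mulrC; apply: (le_trans main).
apply: (@le_trans _ _ (\sum_(s < H) (H%:R * (K' * Num.sqrt n%:R + 1)))).
  apply: ler_sum => s _; apply: (le_trans (sum_Pt_abs_shift n s (f v) z)).
  apply: ler_wpM2r; last by rewrite ler_nat ltnW.
  by rewrite addr_ge0 // mulr_ge0 // sqrtr_ge0.
by rewrite sumr_const card_ord -(mulr_natl (H%:R * _)) mulrA expr2.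
Qed.

End HarmonicFunction.

Lemma pathw_ge0 x s : 0 <= pathw Pm Qm Rm x s.
Proof.
elim: s x => [|d s IH] x /=; first exact: ler01.
by apply: mulr_ge0; [exact: stepw_ge0 | exact: IH].
Qed.

Definition Ex x n (F : seq (step m) -> R) : R :=
  \sum_(s : n.-tuple (step m)) pathw Pm Qm Rm x s * F (tval s).

Lemma tuple_sum_cons n (F : n.+1.-tuple (step m) -> R) :
  \sum_s F s = \sum_d \sum_(s : n.-tuple (step m)) F [tuple of d :: s].
Proof.
rewrite pair_bigA /=.
rewrite (reindex (fun p : step m * n.-tuple (step m) => [tuple of p.1 :: p.2])) //=.
exists (fun s => (thead s, [tuple of behead s])).
  by move=> [d s] _ /=; rewrite theadE; congr (_, _); exact: val_inj.
by move=> s _ /=; rewrite [RHS]tuple_eta.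
Qed.

Lemma Ex0 x F : Ex x 0 F = F [::].
Proof.
rewrite /Ex (eq_bigr (fun _ => F [::])) => [|s _]; last by rewrite tuple0 mul1r.
by rewrite sumr_const card_tuple expn0.
Qed.

Lemma Ex_cons x n F : Ex x n.+1 F =
  \sum_d stepw Pm Qm Rm x d * Ex (move x d) n (fun s => F (d :: s)).
Proof.
rewrite /Ex tuple_sum_cons; apply: eq_bigr => d _.
by rewrite mulr_sumr; apply: eq_bigr => s _ /=; rewrite mulrA.
Qed.

Lemma Ex_ext x n F G : (forall s, F s = G s) -> Ex x n F = Ex x n G.
Proof. by move=> FG; apply: eq_bigr => s _; rewrite FG. Qed.

Lemma Ex_one x n : Ex x n (fun _ => 1) = 1.
Proof.
elim: n x => [|n IH] x; first by rewrite Ex0.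
rewrite Ex_cons -[RHS](stepw_sum x); apply: eq_bigr => d _.
by rewrite IH mulr1.
Qed.

Lemma Ex_affine x n a b c F G :
  Ex x n (fun s => a * F s + b * G s + c) = a * Ex x n F + b * Ex x n G + c.
Proof.
rewrite /Ex; transitivity (\sum_(s : n.-tuple (step m))
  (a * (pathw Pm Qm Rm x s * F s) + b * (pathw Pm Qm Rm x s * G s)
   + c * (pathw Pm Qm Rm x s * 1))).
  by apply: eq_bigr => s _; ring.
by rewrite !big_split /= -!mulr_sumr -/(Ex x n (fun _ => 1)) Ex_one mulr1.
Qed.

Definition Evisits v n x := Ex x n (fun s => (visits v x n s)%:R).
Definition Evisits2 v n x := Ex x n (fun s => (visits v x n s)%:R ^+ 2).

Lemma visits_cons (v x : S) n d s :
  visits v x n.+1 (d :: s) = ((x == v) + visits v (move x d) n s)%N.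
Proof. by []. Qed.

Lemma EvisitsS v n x : Evisits v n.+1 x = ind v x + Pop (Evisits v n) x.
Proof.
rewrite /Evisits Ex_cons /Pop; transitivity (\sum_d
  (stepw Pm Qm Rm x d * ind v x + stepw Pm Qm Rm x d * Evisits v n (move x d))).
  apply: eq_bigr => d _; rewrite -mulrDr; congr (_ * _).
  rewrite (Ex_ext _ _ _ (fun s => 0 * 0 + 1 * (visits v (move x d) n s)%:R + ind v x)).
    by rewrite Ex_affine /Evisits; ring.
  by move=> s; rewrite visits_cons natrD /ind; ring.
by rewrite big_split /= -mulr_suml stepw_sum mul1r.
Qed.

Lemma Evisits2S v n x : Evisits2 v n.+1 x =
  ind v x + 2 * ind v x * Pop (Evisits v n) x + Pop (Evisits2 v n) x.
Proof.
rewrite /Evisits2 Ex_cons /Pop; transitivity (\sum_d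
  (stepw Pm Qm Rm x d * ind v x
   + 2 * ind v x * (stepw Pm Qm Rm x d * Evisits v n (move x d))
   + stepw Pm Qm Rm x d * Evisits2 v n (move x d))).
  apply: eq_bigr => d _.
  rewrite (Ex_ext _ _ _ (fun s => (2 * ind v x) * (visits v (move x d) n s)%:R
    + 1 * (visits v (move x d) n s)%:R ^+ 2 + ind v x)).
    by rewrite Ex_affine /Evisits /Evisits2; ring.
  by move=> s; rewrite visits_cons natrD /ind; case: (x == v) => /=; ring.
by rewrite !big_split /= -mulr_suml stepw_sum mul1r -mulr_sumr.
Qed.

Lemma Evisits_Pt v n x : Evisits v n x = \sum_(t < n) Pt t (ind v) x.
Proof.
elim: n x => [|n IH] x; first by rewrite /Evisits Ex0 big_ord0.
rewrite EvisitsS big_ord_recl (Pop_ext _ _ _ IH) Pop_sum.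
by congr (_ + _); apply: eq_bigr => t _.
Qed.

Lemma Evisits_ge0 v n x : 0 <= Evisits v n x.
Proof. by rewrite Evisits_Pt; apply: sumr_ge0 => t _; apply: Pt_ge0; exact: ind_ge0. Qed.

Lemma Evisits2_le v C : 0 <= C ->
  (forall k y, Evisits v k y <= C * Num.sqrt k%:R) ->
  forall n y, Evisits2 v n y <= (1 + 2 * C * Num.sqrt n%:R) * Evisits v n y.
Proof.
move=> C0 hE n; set D := 1 + 2 * C * Num.sqrt n%:R.
suff : forall k, (k <= n)%N -> forall y, Evisits2 v k y <= D * Evisits v k y by apply.
elim=> [|k IH] hk y; first by rewrite /Evisits2 /Evisits !Ex0 expr0n mulr0.
rewrite Evisits2S EvisitsS.
have c0 : 0 <= ind v y <= 1 by rewrite /ind; case: (y == v); rewrite ?lexx ?ler01.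
have hq : Pop (Evisits2 v k) y <= D * Pop (Evisits v k) y.
  by rewrite -Pop_scale; apply: Pop_le => w; apply: IH; exact: ltnW.
have hp : Pop (Evisits v k) y <= C * Num.sqrt n%:R.
  apply: (@le_trans _ _ (Evisits v k.+1 y)).
    by rewrite EvisitsS lerDr /ind ler0n.
  apply: (le_trans (hE _ _)); apply: ler_wpM2l => //.
  by rewrite ler_sqrt ?ler0n // ler_nat.
case/andP: c0 => c0 c1.
have hcp : ind v y * Pop (Evisits v k) y <= ind v y * (C * Num.sqrt n%:R).
  exact: ler_wpM2l.
by move: hq hcp; rewrite /D; nra.
Qed.

Lemma ui_tail_le_Evisits2 z v N M : 0 < M ->
  ui_tail Pm Qm Rm z v N M <= Evisits2 v N z / (N%:R * M).
Proof.
move=> M0; rewrite /Evisits2 /Ex mulr_suml; apply: ler_sum => s _.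
rewrite -mulrA; apply: ler_wpM2l; first exact: pathw_ge0.
apply: (le_trans (tail_le_sqr _ _ _ _ M0 (ler0n _ _))).
by rewrite expr_div_n sqr_sqrtr ?ler0n // invfM mulrA.
Qed.

Lemma Pop_ge_up phi x : (forall y, 0 <= phi y) ->
  \sum_j Pm x.1 x.2 j * phi (x.1 + 1, j) <= Pop phi x.
Proof.
move=> phi0; rewrite Pop_split lerDr; apply: addr_ge0; apply: sum_nonneg_mul_ge0;
  by [exact: Qm_nonneg | exact: Rm_nonneg | move=> j; exact: phi0].
Qed.

Lemma Pop_ge_down phi x : (forall y, 0 <= phi y) ->
  \sum_j Qm x.1 x.2 j * phi (x.1 - 1, j) <= Pop phi x.
Proof.
move=> phi0; rewrite Pop_split -addrA lerDl; apply: addr_ge0; apply: sum_nonneg_mul_ge0;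
  by [exact: Pm_nonneg | exact: Rm_nonneg | move=> j; exact: phi0].
Qed.

Lemma Pop_ge_stay phi x : (forall y, 0 <= phi y) ->
  \sum_j Rm x.1 x.2 j * phi (x.1, j) <= Pop phi x.
Proof.
move=> phi0; rewrite Pop_split addrAC lerDr; apply: addr_ge0; apply: sum_nonneg_mul_ge0;
  by [exact: Pm_nonneg | exact: Qm_nonneg | move=> j; exact: phi0].
Qed.

(* Paths that stay on level k for t steps and then jump to level k + e through B;
   used with (B, e) = (Pm, 1) and (Qm, -1). *)
Lemma Pt_ge_exit {B : int -> 'M[R]_m} {e : int} :
  (forall phi x, (forall y, 0 <= phi y) ->
     \sum_j B x.1 x.2 j * phi (x.1 + e, j) <= Pop phi x) ->
  forall phi t k y, (forall w, 0 <= phi w) ->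
  \sum_j (mxpow (Rm k) t *m B k) y j * phi (k + e, j) <= Pt t.+1 phi (k, y).
Proof.
move=> hB phi t k y phi0; elim: t y => [|t IH] y.
  by rewrite PtS; under eq_bigr do rewrite mul1mx; exact: (hB _ (k, y) phi0).
rewrite mxpowS_mul_sum PtS.
apply: le_trans (Pop_ge_stay _ (k, y) (fun w => Pt_ge0 _ _ _ phi0)).
by apply: ler_sum => l _; apply: ler_wpM2l; [exact: Rm_nonneg | exact: IH].
Qed.

Lemma Rpow_mul_ge0 (B : 'M[R]_m) k t i j : nonneg B -> 0 <= (mxpow (Rm k) t *m B) i j.
Proof. by move=> B0; exact: (nonneg_mul (nonneg_mxpow t (Rm_nonneg k)) B0 i j). Qed.

Lemma sum_Pt_ind_up T k y j :
  \sum_(t < T) (mxpow (Rm k) t *m Pm k) y j <=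
  \sum_(s < (2 * T).+2) Pt s (ind (k + 1, j)) (k, y).
Proof.
apply: (@le_trans _ _ (\sum_(t < T) Pt (t + 1)%N (ind (k + 1, j)) (k, y))); last first.
  apply: (sum_window (fun s => Pt s (ind (k + 1, j)) (k, y))); last by lia.
  by move=> s; apply: Pt_ge0; exact: ind_ge0.
apply: ler_sum => t _; rewrite addn1.
apply: le_trans (Pt_ge_exit Pop_ge_up _ t k y (ind_ge0 (k + 1, j))).
apply: le_trans (ler_term_sum j _); last first.
  by move=> j'; apply: mulr_ge0; [apply: Rpow_mul_ge0; exact: Pm_nonneg | exact: ind_ge0].
by rewrite /ind eqxx mulr1.
Qed.

Lemma sum_Pt_ind_up_down T k y l j :
  (\sum_(t < T) (mxpow (Rm k) t *m Pm k) y j) *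
  (\sum_(u < T) (mxpow (Rm (k + 1)) u *m Qm (k + 1)) j l)
   <= T.+1%:R * \sum_(s < (2 * T).+2) Pt s (ind (k, l)) (k, y).
Proof.
set G := fun s => Pt s (ind (k, l)) (k, y).
have G0 : forall s, 0 <= G s by move=> s; apply: Pt_ge0; exact: ind_ge0.
rewrite mulr_suml; apply: (@le_trans _ _ (\sum_(t < T) \sum_(s < (2 * T).+2) G s)).
  apply: ler_sum => t _; rewrite mulr_sumr.
  apply: (@le_trans _ _ (\sum_(u < T) G (u + t.+2)%N)); last first.
    by apply: sum_window => //; have := ltn_ord t; lia.
  apply: ler_sum => u _; rewrite /G (_ : (u + t.+2 = t.+1 + u.+1)%N); last by lia.
  have Pt_ind_ge0 w : 0 <= Pt u.+1 (ind (k, l)) w by apply: Pt_ge0; exact: ind_ge0.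
  rewrite PtD; apply: le_trans (Pt_ge_exit Pop_ge_up _ t k y Pt_ind_ge0).
  apply: le_trans (ler_term_sum j _); last first.
    by move=> j'; apply: mulr_ge0 => //; apply: Rpow_mul_ge0; exact: Pm_nonneg.
  apply: ler_wpM2l; first by apply: Rpow_mul_ge0; exact: Pm_nonneg.
  apply: le_trans (Pt_ge_exit Pop_ge_down _ u (k + 1) j (ind_ge0 (k, l))).
  apply: le_trans (ler_term_sum l _); last first.
    by move=> l'; apply: mulr_ge0; [apply: Rpow_mul_ge0; exact: Qm_nonneg | exact: ind_ge0].
  by rewrite /ind addrK eqxx mulr1.
rewrite sumr_const card_ord -(mulr_natl (\sum_(s < (2 * T).+2) G s)).
by apply: ler_wpM2r; [exact: sumr_ge0 | rewrite ler_nat].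
Qed.

Section Ellipticity.
Variables (e0 : R) (k0 : nat).
Hypothesis e0_gt0 : 0 < e0.
Hypothesis ellipticity : forall n, mxnorm (mxpow (Rm n) k0) <= 1 - e0 /\
  (forall i j, e0 <= (invmx (1%:M - Rm n) *m Pm n) i j) /\
  (forall i j, e0 <= (invmx (1%:M - Rm n) *m Qm n) i j).

Lemma exists_exit_time : exists T, forall n, rowbound (mxpow (Rm n) T) (e0 / 2).
Proof.
set r := Num.max (1 - e0) 0.
have r0 : 0 <= r by rewrite /r le_max lexx orbT.
have r1 : r < 1 by rewrite /r gt_max ltr01 andbT ltrBlDr ltrDl.
have [q hq] := exists_expr_le r0 r1 (divr_gt0 e0_gt0 (ltr0Sn _ 1)).
exists (k0 * q)%N => n i; apply: le_trans hq.
have hk0 : rowbound (mxpow (Rm n) k0) r.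
  by apply: mxnorm_rowbound; apply: le_trans (ellipticity n).1 _; rewrite le_max lexx.
exact: rowbound_mxpowM hk0 r0 i.
Qed.

Lemma unitmx_1BRm n : (1%:M - Rm n) \in unitmx.
Proof. exact: unitmx_1B_contract e0_gt0 (mxnorm_rowbound (ellipticity n).1). Qed.

Variable T : nat.
Hypothesis hT : forall n, rowbound (mxpow (Rm n) T) (e0 / 2).

Lemma exit_up_ge n y j : e0 / 2 <= \sum_(t < T) (mxpow (Rm n) t *m Pm n) y j.
Proof.
case: (ellipticity n) => _ [hX hY].
exact: neumann_sum_ge e0_gt0 (unitmx_1BRm n) (kernel_sum1 n) hX hY (hT n) y j.
Qed.

Lemma exit_down_ge n y j : e0 / 2 <= \sum_(t < T) (mxpow (Rm n) t *m Qm n) y j.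
Proof.
case: (ellipticity n) => _ [hX hY].
have hS : forall i, \sum_j (Qm n i j + Pm n i j + Rm n i j) = 1.
  by move=> i; rewrite -(kernel_sum1 n i); apply: eq_bigr => l _; ring.
exact: neumann_sum_ge e0_gt0 (unitmx_1BRm n) hS hY hX (hT n) y j.
Qed.

Definition eta : R := Num.min (e0 / 2) ((e0 / 2) ^+ 2 / T.+1%:R).

Lemma eta_gt0 : 0 < eta.
Proof. by rewrite lt_min divr_gt0 //= divr_gt0 ?exprn_gt0 ?divr_gt0 ?ltr0n. Qed.

Lemma eta_le_up k y j : eta <= \sum_(s < (2 * T).+2) Pt s (ind (k + 1, j)) (k, y).
Proof.
apply: le_trans (le_trans (exit_up_ge k y j) (sum_Pt_ind_up T k y j)).
by rewrite ge_min lexx.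
Qed.

Lemma eta_le_up_down k y (j l : 'I_m) :
  eta <= \sum_(s < (2 * T).+2) Pt s (ind (k, l)) (k, y).
Proof.
apply: (@le_trans _ _ ((e0 / 2) ^+ 2 / T.+1%:R)); first by rewrite ge_min lexx orbT.
rewrite ler_pdivrMr ?ltr0n // expr2 [X in _ <= X]mulrC.
apply: le_trans (sum_Pt_ind_up_down T k y l j).
have e2 : 0 <= e0 / 2 by rewrite divr_ge0 // ltW.
by apply: ler_pM => //; [exact: exit_up_ge | exact: exit_down_ge].
Qed.

Lemma spread_ge (f : S -> R) c :
  (forall k, exists j l, c <= f (k + 1, j) - f (k, l)) ->
  forall v, c * eta <= \sum_(s < (2 * T).+2) Pt s (fun w => `|f w - f v|) v.
Proof.
move=> gap [k y]; have [j [l hjl]] := gap k.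
set v := (k, y); set w1 : S := (k + 1, j); set w2 : S := (k, l).
set g := fun w => `|f w - f v|.
have w12 : w1 != w2.
  by apply/negP => /eqP [] /eqP; rewrite -subr_eq0 addrAC subrr add0r oner_eq0.
have split_g : forall w, g w1 * ind w1 w + g w2 * ind w2 w + 0 <= g w.
  move=> w; rewrite addr0 /ind; case: (eqVneq w w1) => [->|_].
    by rewrite (negPf w12) mulr0 addr0 mulr1.
  case: (eqVneq w w2) => [->|_]; first by rewrite mulr0 add0r mulr1.
  by rewrite !mulr0 addr0 normr_ge0.
have hsum : g w1 * \sum_(s < (2 * T).+2) Pt s (ind w1) v
          + g w2 * \sum_(s < (2 * T).+2) Pt s (ind w2) v
          <= \sum_(s < (2 * T).+2) Pt s g v.
  rewrite !mulr_sumr -big_split; apply: ler_sum => s _.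
  by rewrite -[X in X <= _]addr0 -Pt_lincomb; exact: Pt_le.
have hc : c <= g w1 + g w2.
  apply: (le_trans hjl); apply: le_trans (ler_norm _) _.
  by rewrite /g [`|f w2 - f v|]distrC; exact: ler_distD.
have h1 := eta_le_up k y j; have h2 := eta_le_up_down k y j l.
have g1 : 0 <= g w1 := normr_ge0 _; have g2 : 0 <= g w2 := normr_ge0 _.
have e0' := ltW eta_gt0.
apply: le_trans hsum; rewrite -/w1 -/w2 in h1 h2; nra.
Qed.

End Ellipticity.

Lemma Pm_le1 n i j : Pm n i j <= 1.
Proof.
rewrite -(kernel_sum1 n i); apply: le_trans (ler_term_sum j _); last first.
  by move=> l; case: (kernel_ge0 n i l) => [? [? ?]]; rewrite !addr_ge0.
by case: (kernel_ge0 n i j) => [_ [? ?]]; rewrite -addrA lerDl addr_ge0.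
Qed.

Section LevelGap.
Variables (mf : int -> 'cV[R]_m) (zetam : int -> 'M[R]_m) (rho : int -> 'rV[R]_m).
Variable B : R.
Hypothesis m_gt0 : (0 < m)%N.
Hypothesis zetam_stochastic : forall n, stochastic (zetam n).
Hypothesis rho_gt0 : forall n i, 0 < rho n 0 i.
Hypothesis rho_le : forall n i, rho n 0 i <= B.
Hypothesis rho_flux : forall n,
  (rho n *m Pm n *m (mf (n + 1) - zetam (n + 1) *m mf n)) 0 0 = (2 * m%:R)^-1.

Definition gap_const : R := (2 * m%:R)^-1 / (2 * (m%:R * (m%:R * B))).

Lemma B_gt0 : 0 < B.
Proof. exact: lt_le_trans (rho_gt0 0 (Ordinal m_gt0)) (rho_le 0 (Ordinal m_gt0)). Qed.

Lemma gap_const_gt0 : 0 < gap_const.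
Proof.
have m0 : 0 < m%:R :> R by rewrite ltr0n.
by rewrite /gap_const divr_gt0 ?invr_gt0 ?mulr_gt0 ?B_gt0.
Qed.

(* The flux identity forces some entry of m_{k+1} - zeta^-_{k+1} m_k to be large,
   and each such entry is an average of differences m_{k+1}(j) - m_k(l). *)
Lemma exists_level_gap k : exists j l, gap_const <= mf (k + 1) j 0 - mf k l 0.
Proof.
set u := fun j => (rho k *m Pm k) 0 j.
set dd := fun j => (mf (k + 1) - zetam (k + 1) *m mf k) j 0.
have hu : forall j, 0 <= u j <= m%:R * B.
  move=> j; rewrite /u mxE; apply/andP; split.
    by apply: sumr_ge0 => i _; apply: mulr_ge0; [exact: ltW | exact: Pm_nonneg].
  apply: (@le_trans _ _ (\sum_(i < m) B)); last by rewrite sumr_const card_ord mulr_natl.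
  apply: ler_sum => i _; rewrite -[B]mulr1.
  by apply: ler_pM; [exact: ltW | exact: Pm_nonneg | | exact: Pm_le1].
have hflux : (2 * m%:R)^-1 <= \sum_j u j * dd j.
  by rewrite -(rho_flux k) [X in X <= _]mxE.
have m0 : 0 < m%:R :> R by rewrite ltr0n.
have s0 : 0 < (2 * m%:R)^-1 :> R by rewrite invr_gt0 mulr_gt0.
have [j hj] := exists_ge_weighted s0 (mulr_gt0 m0 B_gt0) hu hflux.
case: (zetam_stochastic (k + 1)) => z0 z1.
have [l hl] := exists_ge_convex (fun l => mf (k + 1) j 0 - mf k l 0) m_gt0 (z0 j) (z1 j).
exists j, l; apply: le_trans hj (le_trans _ hl).
rewrite /dd !mxE; under [X in _ <= X]eq_bigr do rewrite mulrBr.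
by rewrite sumrB -mulr_suml z1 mul1r.
Qed.

End LevelGap.

Section UniformIntegrability.
Variables (mf : int -> 'cV[R]_m) (K' e0 : R) (k0 : nat).
Variables (zetam : int -> 'M[R]_m) (rho : int -> 'rV[R]_m) (B : R).
Hypothesis m_gt0 : (0 < m)%N.
Hypothesis mf_harmonic : forall n,
  mf n = Pm n *m mf (n + 1) + Rm n *m mf n + Qm n *m mf (n - 1).
Hypothesis mf_lipschitz : forall (n1 n2 : int) (i1 i2 : 'I_m),
  `|n1 - n2| <= 1 -> `|mf n1 i1 0 - mf n2 i2 0| <= K'.
Hypothesis e0_gt0 : 0 < e0.
Hypothesis ellipticity : forall n, mxnorm (mxpow (Rm n) k0) <= 1 - e0 /\
  (forall i j, e0 <= (invmx (1%:M - Rm n) *m Pm n) i j) /\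
  (forall i j, e0 <= (invmx (1%:M - Rm n) *m Qm n) i j).
Hypothesis zetam_stochastic : forall n, stochastic (zetam n).
Hypothesis rho_gt0 : forall n i, 0 < rho n 0 i.
Hypothesis rho_le : forall n i, rho n 0 i <= B.
Hypothesis rho_flux : forall n,
  (rho n *m Pm n *m (mf (n + 1) - zetam (n + 1) *m mf n)) 0 0 = (2 * m%:R)^-1.

Definition fm (x : S) : R := mf x.1 x.2 0.

Lemma Pop_fm x : Pop fm x = fm x.
Proof.
rewrite Pop_split /fm.
by have := congr1 (fun M : 'cV[R]_m => M x.2 0) (mf_harmonic x.1); rewrite !mxE => ->; ring.
Qed.

Lemma move_level (x : S) d : `|(move x d).1 - x.1| <= 1.
Proof.
rewrite /move /= (_ : _ - x.1 = (nat_of_ord d.1)%:Z - 1); last by ring.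
have := ltn_ord d.1.
by case: (nat_of_ord d.1) => [|[|[|n]]].
Qed.

Lemma fm_incr x d : `|fm (move x d) - fm x| <= K'.
Proof. exact: mf_lipschitz (move_level x d). Qed.

Lemma K'_ge0 : 0 <= K'.
Proof.
by apply: le_trans (mf_lipschitz 0 0 (Ordinal m_gt0) (Ordinal m_gt0) _); rewrite subrr normr0.
Qed.

Lemma Evisits_le_sqrt :
  exists2 C, 0 <= C & forall v n z, Evisits v n z <= C * Num.sqrt n%:R.
Proof.
have [T hT] := exists_exit_time _ _ e0_gt0 ellipticity.
set delta := gap_const B * eta e0 T.
have delta0 : 0 < delta.
  by rewrite mulr_gt0 ?eta_gt0 // (gap_const_gt0 _ _ m_gt0 rho_gt0 rho_le).
have spread := spread_ge _ _ e0_gt0 ellipticity _ hT fm _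
  (exists_level_gap _ _ _ _ m_gt0 zetam_stochastic rho_gt0 rho_le rho_flux).
set a := ((2 * T).+2)%:R ^+ 2 / delta.
have a0 : 0 <= a by rewrite divr_ge0 ?exprn_ge0 // ltW.
exists (a * (K' + 1)); first by rewrite mulr_ge0 // addr_ge0 ?K'_ge0.
move=> v [|n] z; first by rewrite Evisits_Pt big_ord0 sqrtr0 mulr0.
rewrite Evisits_Pt.
apply: le_trans (sum_Pt_ind_le _ _ Pop_fm fm_incr K'_ge0 _ _ _ delta0 (spread v) n.+1 z) _.
rewrite /a mulrAC -[X in _ <= X]mulrA; apply: ler_wpM2l => //.
have := sqrt_nat_ge1 R n; have := K'_ge0; nra.
Qed.

Lemma Evisits2_le_lin :
  exists2 D, 0 <= D & forall v n z, Evisits2 v n z <= D * n%:R.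
Proof.
have [C C0 hC] := Evisits_le_sqrt.
exists (C + 2 * C ^+ 2); first by rewrite addr_ge0 // mulr_ge0 // exprn_ge0.
move=> v n z; apply: (le_trans (Evisits2_le _ _ C0 (hC v) n z)).
have hs : Num.sqrt (n%:R : R) <= Num.sqrt n%:R ^+ 2.
  by rewrite sqr_sqrtr ?ler0n ?sqrt_nat_le.
rewrite -[X in _ <= _ * X](@sqr_sqrtr _ (n%:R : R)) ?ler0n //.
move: (hC v n z) (Evisits_ge0 v n z) (sqrtr_ge0 (n%:R : R)) hs.
set s := Num.sqrt _; set E := Evisits v n z => hE E0 s0 hs.
have p1 : 0 <= (1 + 2 * C * s) * (C * s - E).
  by apply: mulr_ge0; [rewrite addr_ge0 // !mulr_ge0 | rewrite subr_ge0].
have p2 : 0 <= C * (s ^+ 2 - s) by rewrite mulr_ge0 // subr_ge0.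
nra.
Qed.

Lemma ui_tail_uniform eps : 0 < eps ->
  exists M, forall N z v, ui_tail Pm Qm Rm z v N M <= eps.
Proof.
move=> eps0; have [D D0 hD] := Evisits2_le_lin.
exists (D / eps + 1) => N z v.
have M0 : 0 < D / eps + 1 by rewrite ltr_pwDr // divr_ge0 // ltW.
apply: (le_trans (ui_tail_le_Evisits2 z v N _ M0)).
case: N => [|N]; first by rewrite mul0r invr0 mulr0 ltW.
rewrite ler_pdivrMr ?mulr_gt0 ?ltr0n //; apply: (le_trans (hD v N.+1 z)).
rewrite mulrCA [D * _]mulrC; apply: ler_wpM2l; first exact: ler0n.
by rewrite mulrDr mulr1 mulrCA divff ?gt_eqF // mulr1 lerDl ltW.
Qed.

End UniformIntegrability.
End Walk.
Arguments ui_tail_uniform {R m Pm Qm Rm} kernel_ge0 kernel_sum1 {mf K' e0 k0 zetam rho B}.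

Theorem lemma6p3 (R : realType) (m : nat) (Pm Qm Rm : int -> 'M[R]_m)
    (zeta zetam : int -> 'M[R]_m) (mf : int -> 'cV[R]_m)
    (rho : int -> 'rV[R]_m) (a : R) :
  (0 < m)%N ->
  standing_assumptions Pm Qm Rm zeta zetam mf rho a ->
  forall K : R, 0 < K ->
  forall eps : R, 0 < eps ->
  exists M : R, forall (N : nat) (z : int * 'I_m) (k : int) (y : 'I_m),
    `|(k%:~R : R)| <= K * Num.sqrt (N%:R) ->
    ui_tail Pm Qm Rm z (k, y) N M <= eps.
Proof.
move=> m_gt0 SA K K_gt0 eps eps_gt0.
case: SA => ker_ge0 [ker_sum1 [[e0 [k0 [e0_gt0 ellip]]] [_ [_ [mf_harm [[K' mf_lip]
  [_ [zetam_st [_ [_ [rho_gt0 [[B rho_le] [_ [_ [rho_flux _]]]]]]]]]]]]]]].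
have [M hM] := ui_tail_uniform ker_ge0 ker_sum1 m_gt0 mf_harm mf_lip e0_gt0 ellip
  zetam_st rho_gt0 rho_le rho_flux _ eps_gt0.
by exists M => N z k y _; exact: hM.
Qed.
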